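(* Let $T>0$ and let $\mathbb T$ be a nonempty closed $T$-periodic time scale. Then for every $x\in C^1_T$, $$\|x-\overline x\|_\infty\le \tfrac T2\,\|x^\Delta\|_\infty,$$ so that $k(\mathbb T)\le T/2$.
   Context: Time scale calculus in the sense of Hilger: $x^\Delta$ is the $\Delta$-derivative and $\int\cdot\,\Delta t$ the $\Delta$-integral. $\mathbb T$ is $T$-periodic if $\mathbb T+T=\mathbb T$. $C^1_T$ is the space of continuous $T$-periodic functions $x:\mathbb T\to\mathbb R$ that are $\Delta$-differentiable with continuous $\Delta$-derivative; $\|x\|_\infty=\sup_{[0,T]\cap\mathbb T}|x|$; $\overline x=\frac1T\int_0^Tx(t)\Delta t$. $k(\mathbb T)$ denotes the smallest constant $k\ge0$ such that $\|x-\overline x\|_\infty\le k\|x^\Delta\|_\infty$ for all $x\in C^1_T$. *)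

From HB Require Import structures.
From mathcomp Require Import all_boot all_order all_algebra.
From mathcomp Require Import all_classical all_reals all_analysis.
Set Implicit Arguments. Unset Strict Implicit. Unset Printing Implicit Defensive.
Import Order.TTheory GRing.Theory Num.Theory.
Import numFieldNormedType.Exports.
Local Open Scope classical_set_scope.
Local Open Scope ring_scope.

Section TimeScales.
Variable R : realType.
Implicit Types (TS : set R) (T t a b : R) (f x xd : R -> R).

Definition time_scale TS : Prop := TS !=set0 /\ closed TS.

Definition periodic_ts TS T : Prop := forall t, TS t <-> TS (t + T).

Definition fjump TS t : R :=
  if `[< exists s, TS s /\ t < s >] then inf [set s | TS s /\ t < s] else t.

Definition delta_deriv TS f t d : Prop :=
  forall e : R, 0 < e -> exists2 del : R, 0 < del &
    forall s, TS s -> `|t - s| < del ->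
      `|(f (fjump TS t) - f s) - d * (fjump TS t - s)| <= e * `|fjump TS t - s|.

Definition delta_antideriv TS F f : Prop :=
  forall t, TS t -> delta_deriv TS F t (f t).

Definition first_pt TS a : R := inf [set s | TS s /\ a <= s].

(* delta-integral  int_a^b f(t) Delta t  (= integral over [a,b) cap TS),
   computed via an antiderivative F (unique up to a constant) *)
Definition delta_integral TS f a b : R :=
  xget 0 [set I | exists F, delta_antideriv TS F f /\
                       I = F (first_pt TS b) - F (first_pt TS a)].

Definition ts_mean TS T x : R := delta_integral TS x 0 T / T.

Definition ts_supnorm TS T f : R :=
  sup [set `|f t| | t in TS `&` `[0, T]].

Definition C1T TS T x xd : Prop :=
  [/\ {within TS, continuous x},
      (forall t, TS t -> x (t + T) = x t),
      (forall t, TS t -> delta_deriv TS x t (xd t)) &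
      {within TS, continuous xd}].

Definition k_ts TS T : R :=
  inf [set k | 0 <= k /\ forall x xd, C1T TS T x xd ->
        ts_supnorm TS T (fun t => x t - ts_mean TS T x) <= k * ts_supnorm TS T xd].

End TimeScales.

(* Let TS be a nonempty closed T-periodic time scale and x in C^1_T, with
   N = ||x^Delta||_oo on the window TS `&` [0, T].  The proof has three parts.
   1. Mean value inequality: if f^Delta <= M on TS `&` [a, b) then
      f b - f a <= M (b - a).  It follows from a time-scale induction
      principle (a supremum argument that treats right-scattered,
      right-dense and left-dense points separately).
   2. Existence of Delta-antiderivatives of continuous functions: the
      Lebesgue integral of the step extension u |-> x (last point of TS <= u)
      is one.  Hence the Delta-integral over [0, T] equals G (t0 + T) - G t0
      for an antiderivative G, where t0 is the first point of TS in [0, oo).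
   3. Oscillation estimate: two values of x on the window differ by at most
      N T / 2 (walk from s to t, or around the period, whichever is shorter).
      The mean value inequality applied to G u - x(t) u then puts the mean
      within N T / 2 of every x(t), which is the norm bound; the bound on
      k(TS) follows because T / 2 is an admissible constant. *)

From HB Require Import structures.
From mathcomp Require Import all_boot all_order all_algebra.
From mathcomp Require Import all_classical all_reals all_analysis.
From mathcomp Require Import lra ring.
From mathcomp Require Import measurable_realfun.
Set Implicit Arguments. Unset Strict Implicit. Unset Printing Implicit Defensive.
Import Order.TTheory GRing.Theory Num.Theory.
Import numFieldNormedType.Exports.
Local Open Scope classical_set_scope.
Local Open Scope ring_scope.

Lemma le_add_scaled_eps (R : realFieldType) (x y c : R) : 0 <= c ->
  (forall e, 0 < e -> x <= y + e * c) -> x <= y.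
Proof.
move=> c0 H; apply/ler_addgt0Pr => e e0.
have c1 : 0 < c + 1 by lra.
apply: (le_trans (H (e / (c + 1)) (divr_gt0 e0 c1))); rewrite lerD2l.
by rewrite mulrAC ler_pdivrMr // ler_pM2l //; lra.
Qed.

Section ClosedTimeScale.
Variables (R : realType) (TS : set R).
Hypothesis TScl : closed TS.

Lemma closed_approx p :
  (forall e : R, 0 < e -> exists2 s, TS s & `|p - s| < e) -> TS p.
Proof.
move=> H; apply: TScl => B /nbhs_ballP [e /= e0 sub].
by have [s Ts ps] := H e e0; exists s; split => //; apply: sub.
Qed.

Lemma sup_in_ts (E : set R) : E `<=` TS -> E !=set0 -> has_ubound E ->
  TS (sup E).
Proof.
move=> ET ne ub; apply: closed_approx => e e0.
have [s Es lts] := sup_adherent e0 (conj ne ub).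
exists s; first exact: ET.
have := sup_upper_bound (conj ne ub) Es => hs.
rewrite ger0_norm ?subr_ge0 //; lra.
Qed.

Lemma inf_in_ts (E : set R) : E `<=` TS -> E !=set0 -> has_lbound E ->
  TS (inf E).
Proof.
move=> ET ne lb; apply: closed_approx => e e0.
have [s Es lts] := inf_adherent e0 (conj ne lb).
exists s; first exact: ET.
have := ge_inf lb Es => hs.
rewrite distrC ger0_norm ?subr_ge0 //; lra.
Qed.

Lemma fjump_props t : (exists s, TS s /\ t < s) ->
  [/\ TS (fjump TS t), t <= fjump TS t &
      forall s, TS s -> t < s -> fjump TS t <= s].
Proof.
move=> ex; rewrite /fjump; case: asboolP => // _.
have ne : [set s | TS s /\ t < s] !=set0 by case: ex => s hs; exists s.
have lb : has_lbound [set s | TS s /\ t < s] by exists t => s [_ /ltW].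
split.
- by apply: inf_in_ts => // s [].
- by apply: lb_le_inf => // s [_ /ltW].
- by move=> s Ts ts; apply: ge_inf.
Qed.

Lemma right_dense_approx t : (exists s, TS s /\ t < s) -> fjump TS t = t ->
  forall e, 0 < e -> exists s, [/\ TS s, t < s & s < t + e].
Proof.
move=> ex; rewrite /fjump; case: asboolP => // _ sE e e0.
have hi : has_inf [set s | TS s /\ t < s].
  by split; [case: ex => s ?; exists s | exists t => s [_ /ltW]].
by have [s [Ts ts] lts] := inf_adherent e0 hi; exists s; split; rewrite // -sE.
Qed.

Lemma first_pt_props a : (exists s, TS s /\ a <= s) ->
  [/\ TS (first_pt TS a), a <= first_pt TS a &
      forall s, TS s -> a <= s -> first_pt TS a <= s].
Proof.
move=> ex.
have ne : [set s | TS s /\ a <= s] !=set0 by case: ex => s hs; exists s.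
have lb : has_lbound [set s | TS s /\ a <= s] by exists a => s [].
split.
- by apply: inf_in_ts => // s [].
- by apply: lb_le_inf => // s [].
- by move=> s Ts ts; apply: ge_inf.
Qed.

Lemma bounded_on_window (f : R -> R) a b : {within TS, continuous f} ->
  exists B, forall t, TS t -> a <= t <= b -> `|f t| <= B.
Proof.
move=> cf.
have cW : compact (`[a, b] `&` TS).
  by apply: compact_closedI => //; exact: segment_compact.
have cfW : {within `[a, b] `&` TS, continuous f}.
  by apply: continuous_subspaceW cf => t [].
have [M [_ HM]] := compact_bounded (continuous_compact cfW cW).
exists (`|M| + 1) => t Tt tab.
apply: (HM (`|M| + 1)); first by have := ler_norm M; lra.
by exists t => //; split => //=; rewrite in_itv.
Qed.

End ClosedTimeScale.

Section DeltaDerivative.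
Variables (R : realType) (TS : set R).
Implicit Types (f : R -> R) (t d : R).

(* At t itself the defining estimate is exact: f (sigma t) - f t = d (sigma t - t). *)
Lemma delta_deriv_jump f t d : TS t -> delta_deriv TS f t d ->
  f (fjump TS t) - f t = d * (fjump TS t - t).
Proof.
move=> Tt H; apply/eqP; rewrite -subr_eq0 -normr_le0.
apply: (@le_add_scaled_eps _ _ 0 `|fjump TS t - t|) => // e e0.
have [del del0 Hd] := H e e0.
by rewrite add0r; apply: Hd; rewrite // subrr normr0.
Qed.

Lemma delta_deriv_cont f t d : TS t -> delta_deriv TS f t d ->
  forall eta, 0 < eta -> exists2 del, 0 < del &
    forall s, TS s -> `|t - s| < del -> `|f s - f t| < eta.
Proof.
move=> Tt H eta eta0.
set sg := fjump TS t; set c := `|sg - t|.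
have c0 : 0 <= c by exact: normr_ge0.
have nd := normr_ge0 d.
have e0 : 0 < eta / (2 * (c + 1)) by apply: divr_gt0 => //; lra.
have d1 : 0 < eta / (2 * (`|d| + 1)) by apply: divr_gt0 => //; lra.
have [del0 del00 Hd] := H _ e0.
exists (Num.min del0 (Num.min 1 (eta / (2 * (`|d| + 1))))).
  by rewrite !lt_min del00 ltr01 d1.
move=> s Ts; rewrite !lt_min => /and3P[sdel0 s1 sd1].
have -> : f s - f t = - (f sg - f s - d * (sg - s)) + d * (s - t).
  by have := delta_deriv_jump Tt H; rewrite -/sg mulrBr; lra.
apply: (le_lt_trans (ler_normD _ _)); rewrite normrN normrM.
have err : eta / (2 * (c + 1)) * `|sg - s| <= eta / 2.
  have sgs : `|sg - s| <= c + 1.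
    have -> : sg - s = (sg - t) + (t - s) by ring.
    by apply: (le_trans (ler_normD _ _)); rewrite lerD2l ltW.
  apply: (le_trans (ler_wpM2l (ltW e0) sgs)).
  by rewrite le_eqVlt; apply/orP; left; apply/eqP; field; lra.
have lin : `|d| * `|s - t| < eta / 2.
  rewrite distrC in sd1; have nst := normr_ge0 (s - t).
  have : (`|d| + 1) * `|s - t| < (`|d| + 1) * (eta / (2 * (`|d| + 1))).
    by rewrite ltr_pM2l //; lra.
  have -> : (`|d| + 1) * (eta / (2 * (`|d| + 1))) = eta / 2 by field; lra.
  nra.
have := Hd s Ts sdel0; rewrite -/sg; lra.
Qed.

Lemma delta_deriv_opp f t d : delta_deriv TS f t d ->
  delta_deriv TS (fun s => - f s) t (- d).
Proof.
move=> H e e0; have [del del0 Hd] := H e e0; exists del => // s Ts ts.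
have -> : - f (fjump TS t) - - f s - - d * (fjump TS t - s) =
          - (f (fjump TS t) - f s - d * (fjump TS t - s)) by ring.
by rewrite normrN; exact: Hd.
Qed.

Lemma delta_deriv_sub_linear f t d c : delta_deriv TS f t d ->
  delta_deriv TS (fun s => f s - c * s) t (d - c).
Proof.
move=> H e e0; have [del del0 Hd] := H e e0; exists del => // s Ts ts.
have -> : f (fjump TS t) - c * fjump TS t - (f s - c * s) - (d - c) * (fjump TS t - s)
          = f (fjump TS t) - f s - d * (fjump TS t - s) by ring.
exact: Hd.
Qed.

End DeltaDerivative.

Section TimeScaleInduction.
Variables (R : realType) (TS : set R).
Hypothesis TScl : closed TS.

Definition left_dense t := forall d : R, 0 < d -> exists s, TS s /\ t - d < s < t.

Variables (P : R -> Prop) (a b : R).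
Hypotheses (Ta : TS a) (Tb : TS b) (ab : a <= b).
Hypothesis P_start : P a.
Hypothesis P_rs : forall t, TS t -> a <= t < b -> t < fjump TS t -> P t ->
  P (fjump TS t).
Hypothesis P_rd : forall t, TS t -> a <= t < b -> fjump TS t = t -> P t ->
  exists2 d, 0 < d & forall s, TS s -> t < s < t + d -> P s.
Hypothesis P_ld : forall t, TS t -> a < t <= b -> left_dense t ->
  (forall s, TS s -> a <= s < t -> P s) -> P t.

(* Points up to which P holds throughout; the proof shows sup good = b. *)
Let good t := [/\ TS t, a <= t, t <= b & forall s, TS s -> a <= s <= t -> P s].
Let c := sup good.

Let good_a : good a.
Proof.
split => // s Ts /andP[as_ sa].
by have -> : s = a by apply/le_anti; rewrite sa as_.
Qed.

Let good_has_sup : has_sup good.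
Proof. by split; [exists a; exact: good_a | exists b => t []]. Qed.

Let c_props : [/\ TS c, a <= c & c <= b].
Proof.
split.
- by have [ne ub] := good_has_sup; apply: (sup_in_ts TScl) => // t [].
- exact: sup_upper_bound good_has_sup _ good_a.
- by apply: ge_sup; [case: good_has_sup | move=> t []].
Qed.

Let good_below s : TS s -> a <= s < c -> P s.
Proof.
move=> Ts /andP[as_ sc].
have sc' : 0 < c - s by rewrite subr_gt0.
have [t [_ _ _ Pt] lt] := sup_adherent sc' good_has_sup.
by apply: Pt => //; rewrite as_ /=; move: lt; rewrite -/c; lra.
Qed.

(* c is good: either it is left-dense (use P_ld) or it is attained. *)
Let good_c : good c.
Proof.
have [Tc ac cb] := c_props.
split => // s Ts /andP[as_]; rewrite le_eqVlt => /orP[/eqP -> | sc]; last first.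
  by apply: good_below => //; rewrite as_ sc.
have [->|a_c] := eqVneq c a; first exact: P_start.
have a_c' : a < c by rewrite lt_neqAle eq_sym a_c ac.
have [ld|nld] := pselect (left_dense c).
  apply: (P_ld Tc _ ld) => [|s' Ts' s'c]; first by rewrite a_c' cb.
  exact: good_below.
move: nld => /existsNP [d /not_implyP [d0 /forallNP nd]].
have [t [Tt at_ tb Pt] lt] := sup_adherent d0 good_has_sup.
have tc : t <= c by apply: sup_upper_bound good_has_sup _ _.
have -> : c = t.
  apply/le_anti; rewrite tc andbT leNgt; apply/negP => tc'.
  by apply: (nd t); split => //; apply/andP; split; rewrite // -/c.
by apply: Pt; rewrite // at_ lexx.
Qed.

(* c = b: below b, the right-scattered or right-dense step would push the
   good region past c. *)
Let c_eq_b : c = b.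
Proof.
have [Tc ac cb] := c_props; have [_ _ _ Pc] := good_c.
apply/le_anti; rewrite cb leNgt /=; apply/negP => cb'.
have ex : exists s, TS s /\ c < s by exists b.
have [Tsg csg sg_min] := fjump_props TScl ex.
have acb : a <= c < b by rewrite ac cb'.
have Pc' : P c by apply: Pc; rewrite // ac lexx.
have [csg'|sgc] := ltP c (fjump TS c).
- have Psg := P_rs Tc acb csg' Pc'.
  have : good (fjump TS c).
    split => //; [lra | exact: sg_min | move=> s Ts /andP[as_ ssg]].
    have [sc|cs] := leP s c; first by apply: Pc; rewrite // as_.
    by have -> : s = fjump TS c by apply/le_anti; rewrite ssg sg_min.
  by move/(sup_upper_bound good_has_sup); rewrite -/c; lra.
- have sgE : fjump TS c = c by apply/le_anti; rewrite sgc csg.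
  have [d d0 Pd] := P_rd Tc acb sgE Pc'.
  have md : 0 < Num.min d (b - c) by rewrite lt_min d0 subr_gt0 cb'.
  have [s [Ts cs smd]] := right_dense_approx ex sgE md.
  have m1 : Num.min d (b - c) <= d by rewrite ge_min lexx.
  have m2 : Num.min d (b - c) <= b - c by rewrite ge_min lexx orbT.
  have : good s.
    split => //; [lra | lra | move=> s' Ts' /andP[as' s's]].
    have [s'c|cs'] := leP s' c; first by apply: Pc; rewrite // as'.
    by apply: Pd => //; apply/andP; split; lra.
  by move/(sup_upper_bound good_has_sup); rewrite -/c; lra.
Qed.

Lemma ts_induction t : TS t -> a <= t <= b -> P t.
Proof. by move=> Tt tab; have [_ _ _ Pc] := good_c; apply: Pc; rewrite // c_eq_b. Qed.

End TimeScaleInduction.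

Section MeanValueInequality.
Variables (R : realType) (TS : set R).
Hypothesis TScl : closed TS.
Variables (f fd : R -> R) (a b : R).
Hypotheses (Ta : TS a) (Tb : TS b) (ab : a <= b).
Hypothesis f_deriv : forall t, TS t -> a <= t <= b -> delta_deriv TS f t (fd t).

Let f_deriv_lt t : TS t -> a <= t < b -> delta_deriv TS f t (fd t).
Proof. by move=> Tt /andP[at_ tb]; apply: f_deriv; rewrite // at_ ltW. Qed.

Let mvi_slack M eps : 0 < eps -> (forall t, TS t -> a <= t < b -> fd t <= M) ->
  f b - f a <= (M + eps) * (b - a).
Proof.
move=> e0 HM; set K := M + eps.
apply: (ts_induction (P := fun s => f s - f a <= K * (s - a)) TScl Ta Tb ab
  _ _ _ _ Tb); [by rewrite !subrr mulr0 | | | | by rewrite ab lexx].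
- move=> t Tt tab tsg Pt.
  have J := delta_deriv_jump Tt (f_deriv_lt Tt tab).
  have H : fd t * (fjump TS t - t) <= M * (fjump TS t - t).
    by apply: ler_wpM2r; [rewrite subr_ge0 ltW | exact: HM].
  rewrite /K in Pt *; nra.
- move=> t Tt tab sgE Pt; have [del del0 Hd] := f_deriv_lt Tt tab e0.
  exists del => // s Ts /andP[ts tsd].
  have nts : `|t - s| = s - t by rewrite distrC ger0_norm //; lra.
  have := Hd s Ts; rewrite sgE nts => /(_ ltac:(lra)) /lerNnormlW.
  have H : fd t * (s - t) <= M * (s - t).
    by apply: ler_wpM2r; [rewrite subr_ge0 ltW | exact: HM].
  rewrite /K in Pt *; nra.
- move=> t Tt /andP[at_ tb] ld Pbelow; apply/ler_addgt0Pr => eta eta0.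
  have nK := normr_ge0 K.
  have eta2 : 0 < eta / 2 by lra.
  have [del del0 Hd] := delta_deriv_cont Tt (f_deriv Tt (ltac:(by rewrite ltW))) eta2.
  have eK : 0 < eta / (2 * (`|K| + 1)) by apply: divr_gt0 => //; lra.
  set d := Num.min del (Num.min (t - a) (eta / (2 * (`|K| + 1)))).
  have d0 : 0 < d by rewrite !lt_min del0 subr_gt0 at_ eK.
  have [d1 d2 d3] : [/\ d <= del, d <= t - a & d <= eta / (2 * (`|K| + 1))].
    by rewrite !ge_min !lexx !orbT.
  have [s [Ts /andP[tds st]]] := ld d d0.
  have Ps : f s - f a <= K * (s - a) by apply: Pbelow; rewrite // st andbT; lra.
  have ts0 : 0 <= t - s by lra.
  have fs : `|f s - f t| < eta / 2 by apply: Hd; rewrite // (ger0_norm ts0); lra.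
  have Kd : `|K| * d <= eta / 2.
    apply: le_trans (ler_wpM2l nK d3) _.
    have -> : `|K| * (eta / (2 * (`|K| + 1))) = eta / 2 - eta / (2 * (`|K| + 1)).
      by field; lra.
    lra.
  have Kst : K * (s - t) <= `|K| * d.
    apply: le_trans (ler_norm _) _; rewrite normrM distrC (ger0_norm ts0).
    by apply: ler_wpM2l => //; lra.
  move: fs => /ltW; rewrite ler_norml => /andP[fs _]; nra.
Qed.

Lemma mvi M : (forall t, TS t -> a <= t < b -> fd t <= M) ->
  f b - f a <= M * (b - a).
Proof.
move=> HM; apply: (@le_add_scaled_eps _ _ _ (b - a)); first by rewrite subr_ge0.
by move=> e e0; rewrite -mulrDl; exact: mvi_slack.
Qed.

End MeanValueInequality.

Lemma mvi_abs (R : realType) (TS : set R) (f fd : R -> R) a b N :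
  closed TS -> TS a -> TS b -> a <= b ->
  (forall t, TS t -> a <= t <= b -> delta_deriv TS f t (fd t)) ->
  (forall t, TS t -> a <= t < b -> `|fd t| <= N) ->
  `|f b - f a| <= N * (b - a).
Proof.
move=> TScl Ta Tb ab Hd HN.
have up := mvi TScl Ta Tb ab Hd (fun t Tt tab => ler_normlW (HN t Tt tab)).
have Hd' t : TS t -> a <= t <= b -> delta_deriv TS (fun s => - f s) t (- fd t).
  by move=> Tt tab; exact/delta_deriv_opp/Hd.
have low : - f b - - f a <= N * (b - a).
  apply: (mvi TScl Ta Tb ab Hd') => t Tt tab.
  by apply: ler_normlW; rewrite normrN; exact: HN.
by move: up; rewrite ler_norml; lra.
Qed.

Section PeriodicTimeScale.
Variables (R : realType) (TS : set R) (T : R).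
Hypotheses (T0 : 0 < T) (TSne : TS !=set0) (TScl : closed TS).
Hypothesis per : periodic_ts TS T.

Lemma ts_shift_nat t (n : nat) : TS t -> TS (t + n%:R * T) /\ TS (t - n%:R * T).
Proof.
move=> Tt; elim: n => [|n [IHp IHn]]; first by rewrite mul0r addr0 subr0.
rewrite -addn1 natrD mulrDl mul1r; split.
  by rewrite addrA; apply/(per (t + n%:R * T)).
by apply/(per (t - (n%:R * T + T))); rewrite opprD addrA subrK.
Qed.

Lemma ts_unbounded u : (exists s, TS s /\ s <= u) /\ (exists s, TS s /\ u <= s).
Proof.
have [t0 Tt0] := TSne.
have [n ltn] : exists n : nat, `|t0 - u| / T < n%:R.
  by exists (Num.Def.trunc (`|t0 - u| / T)).+1; exact: truncnS_gt.
move: ltn; rewrite ltr_pdivrMr // => ltn.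
have [Tp Tn] := ts_shift_nat n Tt0.
have := ler_norml (t0 - u) `|t0 - u|; rewrite lexx => /esym /andP[lo hi].
by split; [exists (t0 - n%:R * T) | exists (t0 + n%:R * T)]; split => //; lra.
Qed.

Lemma ts_successor t : exists s, TS s /\ t < s.
Proof.
by have [_ [s [Ts ts]]] := ts_unbounded (t + 1); exists s; split => //; lra.
Qed.

Definition prev_pt u := sup [set s | TS s /\ s <= u].

Lemma prev_pt_props u :
  [/\ TS (prev_pt u), prev_pt u <= u & forall s, TS s -> s <= u -> s <= prev_pt u].
Proof.
have ne : [set s | TS s /\ s <= u] !=set0.
  by have [[s Hs] _] := ts_unbounded u; exists s.
have ub : has_ubound [set s | TS s /\ s <= u] by exists u => s [].
split.
- by apply: sup_in_ts => // s [].
- by apply: ge_sup => // s [].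
- by move=> s Ts su; apply: (sup_upper_bound (conj ne ub)).
Qed.

Lemma prev_pt_mono : {homo prev_pt : u v / u <= v}.
Proof.
move=> u v uv; have [Tu pu _] := prev_pt_props u; have [_ _ maxv] := prev_pt_props v.
by apply: maxv => //; exact: le_trans uv.
Qed.

Lemma first_pt_ts a :
  [/\ TS (first_pt TS a), a <= first_pt TS a &
      forall s, TS s -> a <= s -> first_pt TS a <= s].
Proof. by apply: first_pt_props => //; case: (ts_unbounded a). Qed.

Lemma first_pt_shift a : first_pt TS (a + T) = first_pt TS a + T.
Proof.
have [A1 A2 A3] := first_pt_ts a; have [B1 B2 B3] := first_pt_ts (a + T).
apply/le_anti/andP; split; first by apply: B3 (iffLR (per _) A1) _; rewrite lerD2r.
rewrite -lerBrDr; apply: A3; last by rewrite lerBrDr.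
by apply/(per (first_pt TS (a + T) - T)); rewrite subrK.
Qed.

End PeriodicTimeScale.
Section Antiderivative.
Variables (R : realType) (TS : set R) (T : R).
Hypotheses (T0 : 0 < T) (TSne : TS !=set0) (TScl : closed TS).
Hypothesis per : periodic_ts TS T.
Variable x : R -> R.
Hypothesis cx : {within TS, continuous x}.

Local Notation mu := (@lebesgue_measure R).

Definition step_ext u := x (prev_pt TS u).

Lemma prev_pt_between t s u : TS t -> TS s ->
  s <= u < fjump TS t \/ fjump TS t <= u < s -> `|t - prev_pt TS u| <= `|t - s|.
Proof.
move=> Tt Ts; have [Tsg tsg sg_min] := fjump_props TScl (ts_successor T0 TSne per t).
have [Tp pu pmax] := prev_pt_props T0 TSne TScl per u.
move=> [/andP[su usg] | /andP[sgu us]].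
- have [ut|tu] := ltP u t.
    have sp : s <= prev_pt TS u by exact: pmax.
    by rewrite !ger0_norm; lra.
  suff -> : prev_pt TS u = t by rewrite subrr normr0.
  apply/le_anti; rewrite pmax // andbT leNgt; apply/negP => tp.
  by have := sg_min _ Tp tp; lra.
- have sgp : fjump TS t <= prev_pt TS u by exact: pmax.
  by rewrite distrC [`|t - s|]distrC !ger0_norm; lra.
Qed.

Lemma continuous_within_ts t : TS t -> forall e, 0 < e -> exists2 d, 0 < d &
  forall p, TS p -> `|t - p| < d -> `|x t - x p| <= e.
Proof.
move=> Tt e e0.
have := cvgr_dist_le _ _ ((subspace_continuousP TS x).1 cx t Tt) _ e0.
rewrite near_withinE => /(_ (within_filter _ _)) /nbhs_ballP [d d0 Hd].
by exists d => // p Tp tp; apply: Hd.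
Qed.

Lemma step_ext_measurable (D : set R) : measurable D -> measurable_fun D step_ext.
Proof.
move=> mD; apply: (measurable_comp (F := TS)).
- exact: closed_measurable.
- by move=> _ [u _ <-]; have [] := prev_pt_props T0 TSne TScl per u.
- by apply: subspace_continuous_measurable_fun => //; exact: closed_measurable.
- by apply: nondecreasing_measurable => //; exact: (prev_pt_mono T0 TSne TScl per).
Qed.

Lemma step_ext_bounded a b : exists B, forall u, a <= u <= b -> `|step_ext u| <= B.
Proof.
have [B HB] := bounded_on_window TScl (prev_pt TS a) b cx.
exists B => u /andP[au ub]; have [Tp pu _] := prev_pt_props T0 TSne TScl per u.
by apply: HB; rewrite // (prev_pt_mono T0 TSne TScl per au) (le_trans pu ub).
Qed.

Lemma integrable_bounded (f : R -> R) (a b : R) : measurable_fun `[a, b[ f ->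
  (exists B, forall u, a <= u < b -> `|f u| <= B) ->
  mu.-integrable `[a, b[ (EFin \o f).
Proof.
move=> mf [B HB]; apply: measurable_bounded_integrable => //.
- have := @lebesgue_measure_itv R `[a, b[%R => /= ->.
  by case: ifP => _ //; rewrite -EFinD ltry.
- exists B; split; first exact: num_real.
  move=> M BM u /= Au; apply: le_trans (HB u _) (ltW BM).
  by move: Au; rewrite in_itv.
Qed.

Lemma step_ext_integrable a b : mu.-integrable `[a, b[ (EFin \o step_ext).
Proof.
apply: integrable_bounded; first exact: step_ext_measurable.
have [B HB] := step_ext_bounded a b; exists B => u /andP[au ub].
by apply: HB; rewrite au ltW.
Qed.

Definition step_int a b := \int[mu]_(u in `[a, b[) step_ext u.

Lemma step_int_split a b c : a <= b -> b <= c ->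
  step_int a c = step_int a b + step_int b c.
Proof.
move=> ab bc.
have E : `[a, c[%classic = `[a, b[%classic `|` `[b, c[%classic.
  by apply: itv_bndbnd_setU; rewrite bnd_simp.
rewrite /step_int E Rintegral_setU //; first by rewrite -E; exact: step_ext_integrable.
apply/disj_setPS => u [] /=; rewrite !in_itv /= => /andP[_ ub] /andP[bu _].
by move: (lt_le_trans ub bu); rewrite ltxx.
Qed.

Lemma step_int_empty a b : b <= a -> step_int a b = 0.
Proof.
move=> ba; rewrite /step_int.
have -> : `[a, b[%classic = set0.
  apply/seteqP; split => u //= /[!in_itv] /= /andP[au ub].
  by move: (le_lt_trans (le_trans ba au) ub); rewrite ltxx.
exact: Rintegral_set0.
Qed.

Lemma step_int_near a b c e : a <= b ->
  (forall u, a <= u < b -> `|step_ext u - c| <= e) ->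
  `|step_int a b - c * (b - a)| <= e * (b - a).
Proof.
move=> ab H.
have cst_int (k : R) : mu.-integrable `[a, b[ (EFin \o fun=> k).
  by apply: integrable_bounded; [exact: measurable_cst | exists `|k|].
have mu_ab : fine (mu `[a, b[%classic) = b - a.
  have := @lebesgue_measure_itv R `[a, b[%R => /= ->.
  case: ifP => //=; rewrite lte_fin => /negbT; rewrite -leNgt => ba.
  have -> : b = a by apply/le_anti; rewrite ab ba.
  by rewrite subrr.
have lo : \int[mu]_(u in `[a, b[) (c - e) <= step_int a b.
  apply: le_Rintegral => //; [exact: step_ext_integrable |].
  move=> u /= /[!in_itv] /= uu; have := H u uu; rewrite ler_norml; lra.
have hi : step_int a b <= \int[mu]_(u in `[a, b[) (c + e).
  apply: le_Rintegral => //; [exact: step_ext_integrable |].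
  move=> u /= /[!in_itv] /= uu; have := H u uu; rewrite ler_norml; lra.
rewrite !Rintegral_cst // mu_ab in lo hi.
by rewrite ler_norml; apply/andP; split; lra.
Qed.

Definition step_antideriv t := step_int 0 t - step_int t 0.

Lemma step_antideriv_diff a b : a <= b ->
  step_antideriv b - step_antideriv a = step_int a b.
Proof.
move=> ab; rewrite /step_antideriv.
have [a0|a0] := leP 0 a.
  rewrite (step_int_empty (b := 0) (le_trans a0 ab)) (step_int_empty a0).
  by rewrite (step_int_split a0 ab); ring.
have [b0|b0] := leP 0 b.
  rewrite (step_int_empty (b := 0) b0) (step_int_empty (a := 0) (ltW a0)).
  by rewrite (step_int_split (ltW a0) b0); ring.
rewrite (step_int_empty (a := 0) (ltW b0)) (step_int_empty (a := 0) (ltW a0)).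
by rewrite (step_int_split ab (ltW b0)); ring.
Qed.

Lemma step_antideriv_delta : delta_antideriv TS step_antideriv x.
Proof.
move=> t Tt e e0; have [d d0 Hd] := continuous_within_ts Tt e0.
exists d => // s Ts ts.
have near u : s <= u < fjump TS t \/ fjump TS t <= u < s ->
    `|step_ext u - x t| <= e.
  move=> su; have [Tp _ _] := prev_pt_props T0 TSne TScl per u.
  by rewrite distrC; apply: Hd Tp (le_lt_trans (prev_pt_between Tt Ts su) ts).
have [ssg|sgs] := leP s (fjump TS t).
- rewrite [`|fjump TS t - s|]ger0_norm ?subr_ge0 // step_antideriv_diff //.
  by apply: step_int_near => // u uu; apply: near; left.
- rewrite [`|fjump TS t - s|]distrC [`|s - _|]ger0_norm ?subr_ge0 ?(ltW sgs) //.
  have -> : step_antideriv (fjump TS t) - step_antideriv s - x t * (fjump TS t - s)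
      = - (step_int (fjump TS t) s - x t * (s - fjump TS t)).
    by rewrite -step_antideriv_diff ?(ltW sgs) //; ring.
  rewrite normrN; apply: step_int_near; first exact: ltW.
  by move=> u uu; apply: near; right.
Qed.

End Antiderivative.
Section SupNorm.
Variables (R : realType) (TS : set R) (T : R).
Hypothesis TScl : closed TS.

Lemma supnorm_ge (f : R -> R) t : {within TS, continuous f} ->
  TS t -> 0 <= t <= T -> `|f t| <= ts_supnorm TS T f.
Proof.
move=> cf Tt tW; have [B HB] := bounded_on_window TScl 0 T cf.
apply: sup_upper_bound; last by exists t => //; split => //=; rewrite in_itv.
split; first by exists `|f t|, t => //; split => //=; rewrite in_itv.
by exists B => _ [s [Ts /= sW] <-]; apply: HB => //; rewrite -in_itv.
Qed.

Lemma supnorm_le (f : R -> R) c t0 : TS t0 -> 0 <= t0 <= T ->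
  (forall t, TS t -> 0 <= t <= T -> `|f t| <= c) -> ts_supnorm TS T f <= c.
Proof.
move=> Tt0 t0W H; apply: ge_sup; first by exists `|f t0|, t0 => //; split => //=; rewrite in_itv.
by move=> _ [t [Tt /= tW] <-]; apply: H => //; rewrite -in_itv.
Qed.

End SupNorm.

Section PeriodBounds.
Variables (R : realType) (TS : set R) (T : R).
Hypotheses (T0 : 0 < T) (TSne : TS !=set0) (TScl : closed TS).
Hypothesis per : periodic_ts TS T.

(* t0 is the first point of TS in [0, oo); a period is TS `&` [t0, t0 + T).
   The proofs copy T0 into the local context because lra only uses local
   hypotheses. *)
Local Notation t0 := (first_pt TS 0).

Lemma first_pt_window :
  [/\ TS t0, 0 <= t0, t0 <= T & forall s, TS s -> 0 <= s -> t0 <= s].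
Proof.
have Tpos := T0; have [Tt0 t00 t0min] := first_pt_ts T0 TSne TScl per 0.
split => //.
have [//|Tt0'] := lerP t0 T.
have : t0 <= t0 - T by apply: t0min; [apply/(per (t0 - T)); rewrite subrK | lra].
lra.
Qed.

Lemma period_in_window u : TS u -> 0 <= u -> u < t0 + T -> u <= T.
Proof.
move=> Tu u0 ut; have Tpos := T0; have [_ _ _ t0min] := first_pt_window.
have [//|Tu'] := lerP u T.
have : t0 <= u - T by apply: t0min; [apply/(per (u - T)); rewrite subrK | lra].
lra.
Qed.

Lemma oscillation (x xd : R -> R) N :
  (forall t, TS t -> x (t + T) = x t) ->
  (forall t, TS t -> delta_deriv TS x t (xd t)) ->
  (forall t, TS t -> 0 <= t <= T -> `|xd t| <= N) ->
  forall t s, TS t -> TS s -> 0 <= t <= T -> 0 <= s <= T ->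
  `|x t - x s| <= N * (T / 2).
Proof.
move=> perx dx HN; have Tpos := T0.
have [Tt0 t00 t0T t0min] := first_pt_window.
have N0 : 0 <= N by apply: le_trans (HN t0 Tt0 _); rewrite ?t00 ?t0T.
have Lip a b : TS a -> TS b -> 0 <= a -> a <= b -> b <= t0 + T ->
    `|x b - x a| <= N * (b - a).
  move=> Ta Tb a0 ab bt.
  apply: (mvi_abs TScl Ta Tb ab (fun u Tu _ => dx u Tu)) => u Tu /andP[au ub].
  by apply: HN; rewrite // (period_in_window Tu); lra.
move=> t s Tt Ts; wlog st : t s Tt Ts / s <= t => [hwlog tW sW|].
  have [st|ts] := leP s t; first exact: hwlog st tW sW.
  by rewrite distrC; exact: hwlog (ltW ts) sW tW.
move=> /andP[t0' tT] /andP[s0 sT].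
have [short|long] := lerP (t - s) (T / 2).
  by apply: le_trans (Lip s t Ts Tt s0 st _) _; [lra | exact: ler_wpM2l].
have Tt0T : TS (t0 + T) by apply/(per t0).
have L1 := Lip t0 s Tt0 Ts t00 (t0min s Ts s0) ltac:(lra).
have L2 := Lip t (t0 + T) Tt Tt0T t0' ltac:(lra) (lexx _).
rewrite perx // in L2.
have -> : x t - x s = - (x t0 - x t) - (x s - x t0) by ring.
apply: le_trans (ler_normB _ _) _; rewrite normrN.
apply: le_trans (lerD L2 L1) _; rewrite -mulrDr; apply: ler_wpM2l => //; lra.
Qed.

(* The Delta-integral over [0, T] of a continuous function is G (t0 + T) - G t0
   for some Delta-antiderivative G (one exists, so the choice is meaningful). *)
Lemma delta_integral_period (x : R -> R) : {within TS, continuous x} ->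
  exists2 G, delta_antideriv TS G x & delta_integral TS x 0 T = G (t0 + T) - G t0.
Proof.
move=> cx; rewrite /delta_integral; set P := (X in xget 0 X).
have : P (xget 0 P).
  apply: xgetPex; set F := step_antideriv TS x.
  by exists (F (first_pt TS T) - F (first_pt TS 0)), F;
    split => //; exact: (step_antideriv_delta T0 TSne TScl per cx).
have eT : first_pt TS T = t0 + T by rewrite -first_pt_shift // add0r.
by move=> [G [dG ->]]; exists G; rewrite // eT.
Qed.

(* If all values of a continuous x over one period lie within c of v, then so
   does its mean: apply the mean value inequality to G u - v u. *)
Lemma mean_near (x : R -> R) v c : {within TS, continuous x} ->
  (forall u, TS u -> t0 <= u < t0 + T -> `|x u - v| <= c) ->
  `|ts_mean TS T x - v| <= c.
Proof.
move=> cx Hc; have Tpos := T0; have [Tt0 _ _ _] := first_pt_window.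
have [G dG eI] := delta_integral_period cx.
have Tt0T : TS (t0 + T) by apply/(per t0).
have dH u : TS u -> t0 <= u <= t0 + T ->
    delta_deriv TS (fun s => G s - v * s) u (x u - v).
  by move=> Tu _; exact/delta_deriv_sub_linear/dG.
have := mvi_abs TScl Tt0 Tt0T (ltac:(lra)) dH Hc.
have -> : G (t0 + T) - v * (t0 + T) - (G t0 - v * t0) = (ts_mean TS T x - v) * T.
  by rewrite /ts_mean eI; field; lra.
by rewrite normrM (gtr0_norm T0) addrAC subrr add0r ler_pM2r.
Qed.

End PeriodBounds.

Theorem mainTheorem2 (R : realType) (TS : set R) (T : R) :
  0 < T -> time_scale TS -> periodic_ts TS T ->
  (forall x xd : R -> R, C1T TS T x xd ->
     ts_supnorm TS T (fun t => x t - ts_mean TS T x) <= T / 2 * ts_supnorm TS T xd)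
  /\ k_ts TS T <= T / 2.
Proof.
move=> T0 [TSne TScl] per.
have [Tt0 t00 t0T _] := first_pt_window T0 TSne TScl per.
have t0W : 0 <= first_pt TS 0 <= T by rewrite t00 t0T.
have bound x xd : C1T TS T x xd ->
    ts_supnorm TS T (fun t => x t - ts_mean TS T x) <= T / 2 * ts_supnorm TS T xd.
  move=> [cx perx dx cxd]; set N := ts_supnorm TS T xd.
  have HN t : TS t -> 0 <= t <= T -> `|xd t| <= N by exact: supnorm_ge.
  have osc := oscillation T0 TSne TScl per perx dx HN.
  apply: (supnorm_le Tt0 t0W) => t Tt tW; rewrite distrC mulrC.
  apply: mean_near => // u Tu /andP[t0u ut]; apply: osc => //.
  by rewrite (le_trans t00 t0u) (period_in_window T0 TSne TScl per Tu) ?(le_trans t00 t0u).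
split => //; apply: ge_inf; first by exists 0 => k [].
by split => //; apply: divr_ge0; [exact: ltW | exact: ler0n].
Qed.
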